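(* Assume the setting in the context. Let $U\in C^1([0,T];X)$ with $U(t)\in D(d)\cap D(d^\star)$ and $\partial_tU(t)=J(d+d^\star)U(t)$ for all $t\in[0,T]$, and let $\hat U_h^N\in\mathcal{H}_h$ satisfy $$\mathcal{L}_h\big((\mathrm{Id}-P_{\mathfrak{H}})\hat U_h^N,V_h\big)=\big((\mathrm{Id}-P_{\mathfrak{H}})I_h\mathcal{T}^NU,V_h\big)_h\ \ \forall V_h\in\mathcal{H}_h,\qquad P_{\mathfrak{H}}\hat U_h^N=I_hP_{\mathfrak{H}}U(t_N).$$ Let $C_L>0$ be a constant such that $\sup_{W_h\in\mathfrak{H}_h^{\perp_h},W_h\ne0}\mathcal{L}_h(V_h,W_h)/\|W_h\|_{1,h}\ge C_L\|V_h\|_{1,h}$ for all $V_h\in\mathfrak{H}_h^{\perp_h}$. Then $$\big\|(\mathrm{Id}-P_{\mathfrak{H}})\big(I_hU(T)-\hat U_h^N\big)\big\|_{1,h}\le\frac{1}{C_L}\Big(\|\epsilon_h(U(T),\cdot)\|_{1,h}^{\ast}+\|I_h\epsilon_{\Delta t,N}(U)\|_h\Big).$$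
   Context: Continuous setting: $\Omega\subset\mathbb{R}^3$ a domain, $X:=L^2(\Omega;\mathbb{R}^3)\oplus L^2(\Omega;\mathbb{T})\oplus L^2(\Omega;\mathbb{S})\oplus L^2(\Omega;\mathbb{R})$ ($\mathbb{T}$ trace-free, $\mathbb{S}$ symmetric $3\times3$ matrices) with $L^2$ inner product; $d(u_0,u_1,u_2,u_3)=(0,\operatorname{dev}\operatorname{grad}u_0,\operatorname{sym}\operatorname{curl}u_1,\operatorname{div}\operatorname{div}u_2)$ on its natural domain $D(d)$ (the components of the $L^2$ spaces whose image is in $L^2$), $d^\star$ its Hilbert adjoint; $J=\operatorname{diag}(1,-1,1,-1)$. $P_{\mathfrak{H}}$ is the orthogonal projection onto the continuous harmonic forms $\operatorname{Ker}d\cap\operatorname{Ker}d^\star$. Time grid $0=t_0<\dots<t_N=T$; $\mathcal{T}^N$ is a linear map sending sequences $(v^m)_{0\le m\le N}$ in $X$ to $X$, and $\mathcal{T}^NU:=\mathcal{T}^N((U(t_m))_m)$; $\epsilon_{\Delta t,N}(U):=\mathcal{T}^NU-\partial_tU(t_N)$. Discrete setting: finite-dimensional inner product spaces $(\mathcal{H}^i_h,(\cdot,\cdot)_h)$, $i=0,\dots,3$, with linear $d_h:\mathcal{H}^i_h\to\mathcal{H}^{i+1}_h$, $d_h\circ d_h=0$; $\mathcal{H}_h=\prod_i\mathcal{H}^i_h$ with $(V,W)_h=\sum_i(v_i,w_i)_h$, $d_h(v_0,\dots,v_3)=(0,d_hv_0,d_hv_1,d_hv_2)$, graph norm $\|V\|_{1,h}=\|V\|_h+\|d_hV\|_h$;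 $\mathcal{L}_h(V,W):=(Jd_hV,W)_h-(V,Jd_hW)_h$. Linear interpolators $I_h^i$ from (subspaces of) the $i$-th component of $X$ to $\mathcal{H}^i_h$, $I_h:=\operatorname{diag}(I_h^i)$, satisfying the cochain property $d_hI_h^i=I_h^{i+1}d$ ($0\le i<3$); all interpolants appearing are assumed defined. The discrete harmonic forms are $\mathfrak{H}_h=\operatorname{Ker}d_h\cap\operatorname{Ker}d_h^\ast$ ($d_h^\ast$ the $(\cdot,\cdot)_h$-adjoint), with orthogonal projector also denoted $P_{\mathfrak{H}}$ when acting on $\mathcal{H}_h$, and $\perp_h$ denotes orthogonal complement. For $V\in D(d^\star)$ and $W_h\in\mathcal{H}_h$, $\epsilon_h(V,W_h):=(I_hV,d_hW_h)_h-(I_hd^\star V,W_h)_h$, and $\|\ell\|_{1,h}^\ast:=\sup_{W_h\neq0}|\ell(W_h)|/\|W_h\|_{1,h}$ for a linear functional $\ell$ on $\mathcal{H}_h$. *)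

From HB Require Import structures.
From mathcomp Require Import all_boot all_order all_algebra.
From mathcomp Require Import all_classical all_reals all_analysis.
Set Implicit Arguments. Unset Strict Implicit. Unset Printing Implicit Defensive.
Import Order.TTheory GRing.Theory Num.Theory.
Import numFieldNormedType.Exports.
Local Open Scope classical_set_scope.
Local Open Scope ring_scope.

Section Defs.
Context (R : realType).

Record is_inner (V : lmodType R) (ip : V -> V -> R) : Prop := {
  ip_sym : forall x y, ip x y = ip y x;
  ip_linl : forall a x y z, ip (a *: x + y) z = a * ip x z + ip y z;
  ip_pos : forall x, x != 0 -> 0 < ip x x }.

Record subspace_lin (V W : lmodType R) (D : set V) (f : V -> W) : Prop := {
  sl0 : D 0;
  slD : forall a x y, D x -> D y -> D (a *: x + y);
  slL : forall a x y, D x -> D y -> f (a *: x + y) = a *: f x + f y }.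

(* The abstract setting: continuous Hilbert complex
   X0 -d0-> X1 -d1-> X2 -d2-> X3 (closed densely defined operators on their
   natural domains D_i), discrete complex H0 -dh0-> H1 -dh1-> H2 -dh2-> H3
   of finite-dimensional inner product spaces, and interpolators
   I_i : (DI_i subset X_i) -> H_i with the cochain property. *)
Record setting := {
  X0 : completeNormedModType R; X1 : completeNormedModType R;
  X2 : completeNormedModType R; X3 : completeNormedModType R;
  ip0 : X0 -> X0 -> R; ip1 : X1 -> X1 -> R; ip2 : X2 -> X2 -> R; ip3 : X3 -> X3 -> R;
  ip0_inner : is_inner ip0; ip1_inner : is_inner ip1;
  ip2_inner : is_inner ip2; ip3_inner : is_inner ip3;
  ip0_norm : forall x : X0, `|x| = Num.sqrt (ip0 x x);
  ip1_norm : forall x : X1, `|x| = Num.sqrt (ip1 x x);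
  ip2_norm : forall x : X2, `|x| = Num.sqrt (ip2 x x);
  ip3_norm : forall x : X3, `|x| = Num.sqrt (ip3 x x);
  D0 : set X0; D1 : set X1; D2 : set X2;
  d0 : X0 -> X1; d1 : X1 -> X2; d2 : X2 -> X3;
  d0_lin : subspace_lin D0 d0; d1_lin : subspace_lin D1 d1; d2_lin : subspace_lin D2 d2;
  D0_dense : closure D0 = setT; D1_dense : closure D1 = setT; D2_dense : closure D2 = setT;
  d0_closed : closed [set p : X0 * X1 | D0 p.1 /\ p.2 = d0 p.1];
  d1_closed : closed [set p : X1 * X2 | D1 p.1 /\ p.2 = d1 p.1];
  d2_closed : closed [set p : X2 * X3 | D2 p.1 /\ p.2 = d2 p.1];
  d01 : forall u, D0 u -> D1 (d0 u) /\ d1 (d0 u) = 0;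
  d12 : forall u, D1 u -> D2 (d1 u) /\ d2 (d1 u) = 0;
  H0 : vectType R; H1 : vectType R; H2 : vectType R; H3 : vectType R;
  iph0 : H0 -> H0 -> R; iph1 : H1 -> H1 -> R; iph2 : H2 -> H2 -> R; iph3 : H3 -> H3 -> R;
  iph0_inner : is_inner iph0; iph1_inner : is_inner iph1;
  iph2_inner : is_inner iph2; iph3_inner : is_inner iph3;
  dh0 : {linear H0 -> H1}; dh1 : {linear H1 -> H2}; dh2 : {linear H2 -> H3};
  dh01 : forall v, dh1 (dh0 v) = 0;
  dh12 : forall v, dh2 (dh1 v) = 0;
  DI0 : set X0; DI1 : set X1; DI2 : set X2; DI3 : set X3;
  I0 : X0 -> H0; I1 : X1 -> H1; I2 : X2 -> H2; I3 : X3 -> H3;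
  I0_lin : subspace_lin DI0 I0; I1_lin : subspace_lin DI1 I1;
  I2_lin : subspace_lin DI2 I2; I3_lin : subspace_lin DI3 I3;
  coch0 : forall u, D0 u -> DI0 u -> DI1 (d0 u) -> dh0 (I0 u) = I1 (d0 u);
  coch1 : forall u, D1 u -> DI1 u -> DI2 (d1 u) -> dh1 (I1 u) = I2 (d1 u);
  coch2 : forall u, D2 u -> DI2 u -> DI3 (d2 u) -> dh2 (I2 u) = I3 (d2 u) }.

Variable S : setting.

(* X = X0 + X1 + X2 + X3 and H_h = H0 x H1 x H2 x H3 ; (a,b,c,d) = (((a,b),c),d) *)
Definition Xsp := (X0 S * X1 S * X2 S * X3 S)%type.
Definition Hsp := (H0 S * H1 S * H2 S * H3 S)%type.

Definition ipX (u v : Xsp) : R :=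
  ip0 u.1.1.1 v.1.1.1 + ip1 u.1.1.2 v.1.1.2 + ip2 u.1.2 v.1.2 + ip3 u.2 v.2.

Definition dX (u : Xsp) : Xsp := (0, d0 u.1.1.1, d1 u.1.1.2, d2 u.1.2).
Definition DdX : set Xsp := [set u | D0 u.1.1.1 /\ D1 u.1.1.2 /\ D2 u.1.2].

Definition adj_rel (V Z : Xsp) : Prop := forall W, DdX W -> ipX V (dX W) = ipX Z W.
Definition DdstarX : set Xsp := [set V | exists Z, adj_rel V Z].
Definition dstarX (V : Xsp) : Xsp := xget 0 [set Z | adj_rel V Z].

Definition HarmX : set Xsp :=
  [set V | DdX V /\ dX V = 0 /\ DdstarX V /\ dstarX V = 0].
Definition is_PH_X (P : Xsp -> Xsp) : Prop :=
  forall V, HarmX (P V) /\ (forall W, HarmX W -> ipX (V - P V) W = 0).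

Definition iph (v w : Hsp) : R :=
  iph0 v.1.1.1 w.1.1.1 + iph1 v.1.1.2 w.1.1.2 + iph2 v.1.2 w.1.2 + iph3 v.2 w.2.
Definition dh (v : Hsp) : Hsp := (0, dh0 S v.1.1.1, dh1 S v.1.1.2, dh2 S v.1.2).
Definition normh (v : Hsp) : R := Num.sqrt (iph v v).
Definition norm1h (v : Hsp) : R := normh v + normh (dh v).

(* Ker d_h^* : d_h^* V = 0, i.e. (V, d_h W)_h = (0, W)_h for all W *)
Definition Harm_h : set Hsp := [set V | dh V = 0 /\ forall W, iph V (dh W) = 0].
Definition is_PH_h (P : Hsp -> Hsp) : Prop :=
  forall V, Harm_h (P V) /\ (forall W, Harm_h W -> iph (V - P V) W = 0).
Definition perp_h : set Hsp := [set W | forall V, Harm_h V -> iph V W = 0].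

End Defs.

Definition Jop (A B C D : zmodType) (v : (A * B * C * D)%type) : (A * B * C * D)%type :=
  (v.1.1.1, - v.1.1.2, v.1.2, - v.2).

Section Defs2.
Context (R : realType) (S : setting R).

Definition Lh (V W : Hsp S) : R := iph (Jop (dh V)) W - iph V (Jop (dh W)).

Definition Ih (u : Xsp S) : Hsp S :=
  (I0 u.1.1.1, I1 u.1.1.2, I2 u.1.2, I3 u.2).
Definition DIh : set (Xsp S) :=
  [set u | DI0 u.1.1.1 /\ DI1 u.1.1.2 /\ DI2 u.1.2 /\ DI3 u.2].

Definition eps_h (V : Xsp S) (W : Hsp S) : R :=
  iph (Ih V) (dh W) - iph (Ih (dstarX V)) W.

Definition dualnorm (l : Hsp S -> R) : R :=
  sup [set `|l W| / norm1h W | W in [set W : Hsp S | W != 0]].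
End Defs2.

Definition C1_on (R : realType) (V : normedModType R) (T : R) (U U' : R -> V) : Prop :=
  (forall s, s \in `[0, T] ->
     (fun h => h^-1 *: (U (s + h) - U s)) @ within [set h | s + h \in `[0, T]] (dnbhs (0:R))
       --> U' s)
  /\ {within `[0, T], continuous U'}.

From HB Require Import structures.
From mathcomp Require Import all_boot all_order all_algebra.
From mathcomp Require Import all_classical all_reals all_analysis.
From mathcomp Require Import ring lra.
Import Order.TTheory GRing.Theory Num.Theory.
Import numFieldNormedType.Exports.
Local Open Scope classical_set_scope.
Local Open Scope ring_scope.
Set Implicit Arguments. Unset Strict Implicit. Unset Printing Implicit Defensive.

(* Let E be the projected error (Id - P)(I_h U(T) - Û). Harmonic forms are
   invisible to L_h, and for W orthogonal to them the cochain property
   d_h I_h = I_h d turns L_h(I_h U(T), W) into the consistency error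
   ε_h(U(T), J W) plus (I_h ∂_t U(T), W). Subtracting the scheme, which gives
   (I_h T^N U, W) for L_h(Û, W), leaves
     L_h(E, W) = ε_h(U(T), J W) - (I_h ε_{Δt,N}(U), W),
   which is at most (||ε_h(U(T), .)||* + ||I_h ε_{Δt,N}(U)||) ||W||_{1,h}
   since J preserves the graph norm.  The inf-sup condition with constant
   C_L then bounds ||E||_{1,h}. *)

Section InnerProduct.
Variables (R : realType) (V : lmodType R) (ip : V -> V -> R).
Hypothesis ip_inner : is_inner ip.

Lemma ip0l x : ip 0 x = 0.
Proof. by have := ip_linl ip_inner 1 0 0 x; rewrite scale1r addr0 mul1r; lra. Qed.

Lemma ipDl x y z : ip (x + y) z = ip x z + ip y z.
Proof. by have := ip_linl ip_inner 1 x y z; rewrite scale1r mul1r. Qed.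

Lemma ipZl a x z : ip (a *: x) z = a * ip x z.
Proof. by have := ip_linl ip_inner a x 0 z; rewrite !addr0 ip0l addr0. Qed.

Lemma ipNl x z : ip (- x) z = - ip x z.
Proof. by rewrite -scaleN1r ipZl mulN1r. Qed.

Lemma ipBl x y z : ip (x - y) z = ip x z - ip y z.
Proof. by rewrite ipDl ipNl. Qed.

Lemma ipZr a x z : ip z (a *: x) = a * ip z x.
Proof. by rewrite !(ip_sym ip_inner z) ipZl. Qed.

Lemma ipNr x z : ip z (- x) = - ip z x.
Proof. by rewrite !(ip_sym ip_inner z) ipNl. Qed.

Lemma ipBr x y z : ip z (x - y) = ip z x - ip z y.
Proof. by rewrite !(ip_sym ip_inner z) ipBl. Qed.

Lemma ip_ge0 x : 0 <= ip x x.
Proof. by have [->|/(ip_pos ip_inner)/ltW //] := eqVneq x 0; rewrite ip0l. Qed.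

Lemma ip_CS x y : `|ip x y| <= Num.sqrt (ip x x) * Num.sqrt (ip y y).
Proof.
rewrite -sqrtrM ?ip_ge0 // -sqrtr_sqr ler_sqrt ?mulr_ge0 ?ip_ge0 //.
have [->|y0] := eqVneq y 0; first by rewrite (ip_sym ip_inner x) !ip0l expr2 !mulr0.
have yy_gt0 := ip_pos ip_inner y0; have xx_ge0 := ip_ge0 x.
(* Expand 0 <= |(y, y) x - (x, y) y|^2. *)
have := ip_ge0 (ip y y *: x - ip x y *: y).
rewrite ipBl !ipBr !ipZl !ipZr (ip_sym ip_inner y x); nra.
Qed.
End InnerProduct.

Section PairInnerProduct.
Variables (R : realType) (V1 V2 : lmodType R).
Variables (ip1 : V1 -> V1 -> R) (ip2 : V2 -> V2 -> R).

Definition pair_ip (x y : V1 * V2) : R := ip1 x.1 y.1 + ip2 x.2 y.2.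

Lemma is_inner_pair : is_inner ip1 -> is_inner ip2 -> is_inner pair_ip.
Proof.
move=> h1 h2; split=> [x y|a x y z|[x1 x2] x0]; rewrite /pair_ip /=.
- by rewrite (ip_sym h1) (ip_sym h2).
- by rewrite (ip_linl h1) (ip_linl h2); ring.
- have := ip_ge0 h1 x1; have := ip_ge0 h2 x2.
  have [x1_0|/(ip_pos h1)] := eqVneq x1 0; last lra.
  have [x2_0|/(ip_pos h2)] := eqVneq x2 0; last lra.
  by move: x0; rewrite x1_0 x2_0 eqxx.
Qed.
End PairInnerProduct.

Section LinearOnSubspace.
Variables (R : realType) (V W : lmodType R) (D : set V) (f : V -> W).
Hypothesis f_lin : subspace_lin D f.

Lemma sl_rpredD x y : D x -> D y -> D (x + y).
Proof. by move=> Dx Dy; have := slD f_lin 1 Dx Dy; rewrite scale1r. Qed.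

Lemma sl_rpredN x : D x -> D (- x).
Proof. by move=> Dx; have := slD f_lin (-1) Dx (sl0 f_lin); rewrite addr0 scaleN1r. Qed.

Lemma sl_raddfD x y : D x -> D y -> f (x + y) = f x + f y.
Proof. by move=> Dx Dy; have := slL f_lin 1 Dx Dy; rewrite !scale1r. Qed.

Lemma sl_raddf0 : f 0 = 0.
Proof.
have := sl_raddfD (sl0 f_lin) (sl0 f_lin); rewrite addr0 => f00.
by apply: (@addrI _ (f 0)); rewrite addr0 -f00.
Qed.

Lemma sl_raddfN x : D x -> f (- x) = - f x.
Proof.
move=> Dx; have := slL f_lin (-1) Dx (sl0 f_lin).
by rewrite addr0 !scaleN1r sl_raddf0 addr0.
Qed.

Lemma sl_raddfB x y : D x -> D y -> f (x - y) = f x - f y.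
Proof. by move=> Dx Dy; rewrite sl_raddfD ?sl_raddfN //; exact: sl_rpredN. Qed.
End LinearOnSubspace.

Section Sup.
Variable R : realType.

Lemma sup_ge0 (E : set R) : (forall x, E x -> 0 <= x) -> 0 <= sup E.
Proof.
move=> E_ge0; have [[[e Ee] ubE]|/sup_out -> //] := pselect (has_sup E).
by apply: le_trans (E_ge0 _ Ee) _; exact: ub_le_sup.
Qed.

Lemma sup_ratio_le (T : Type) (A : set T) (f g : T -> R) (M : R) :
  0 <= M -> (forall w, A w -> 0 < g w) -> (forall w, A w -> f w <= M * g w) ->
  sup [set f w / g w | w in A] <= M.
Proof.
move=> M_ge0 g_gt0 f_le; set E := [set _ | _ in _].
have [ne|/nonemptyPn ->] := pselect (E !=set0); last by rewrite sup0.
by apply: ge_sup ne _ => _ [w Aw <-]; rewrite ler_pdivrMr ?g_gt0 ?f_le.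
Qed.
End Sup.

Section Jop.
Variables A B C D : zmodType.
Implicit Types x y : (A * B * C * D)%type.

Lemma Jop0 : Jop (0 : A * B * C * D) = 0.
Proof. by rewrite /Jop /= !oppr0. Qed.

Lemma JopK x : Jop (Jop x) = x.
Proof. by case: x => [[[a b] c] d]; rewrite /Jop /= !opprK. Qed.

Lemma JopD x y : Jop (x + y) = Jop x + Jop y.
Proof. by rewrite /Jop /= !opprD. Qed.

Lemma JopN x : Jop (- x) = - Jop x.
Proof. by []. Qed.

Lemma JopB x y : Jop (x - y) = Jop x - Jop y.
Proof. by rewrite JopD JopN. Qed.
End Jop.

Section DiscreteComplex.
Variables (R : realType) (S : setting R).
Implicit Types V W : Hsp S.

Lemma iph_inner : is_inner (@iph R S).
Proof.
exact: (is_inner_pair (is_inner_pair (is_inner_pair (iph0_inner S) (iph1_inner S))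
  (iph2_inner S)) (iph3_inner S)).
Qed.

Lemma dhB V W : dh (V - W) = dh V - dh W.
Proof. by rewrite /dh /= !raddfB -[0 in LHS](subr0 0). Qed.

Lemma dh_Jop W : dh (Jop W) = - Jop (dh W).
Proof. by rewrite /Jop /dh /= !raddfN; congr (_, _, _, _); rewrite ?opprK ?oppr0. Qed.

Lemma iph_Jop V W : iph (Jop V) (Jop W) = iph V W.
Proof.
rewrite /iph /Jop /= (ipNl (iph1_inner S)) (ipNr (iph1_inner S)).
by rewrite (ipNl (iph3_inner S)) (ipNr (iph3_inner S)) !opprK.
Qed.

Lemma iph_Jopr V W : iph V (Jop W) = iph (Jop V) W.
Proof. by rewrite -[in RHS](JopK W) iph_Jop. Qed.

Lemma normh_ge0 V : 0 <= normh V.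
Proof. exact: sqrtr_ge0. Qed.

Lemma normhN V : normh (- V) = normh V.
Proof. by rewrite /normh (ipNl iph_inner) (ipNr iph_inner) opprK. Qed.

Lemma norm1h_ge0 W : 0 <= norm1h W.
Proof. by rewrite addr_ge0 ?normh_ge0. Qed.

Lemma norm1h_gt0 W : W != 0 -> 0 < norm1h W.
Proof.
move=> W0; rewrite ltr_wpDr ?normh_ge0 //.
by rewrite sqrtr_gt0 (ip_pos iph_inner W0).
Qed.

Lemma norm1h0 : norm1h (0 : Hsp S) = 0.
Proof.
have normh0 : normh (0 : Hsp S) = 0 by rewrite /normh (ip0l iph_inner) sqrtr0.
have dh0 : dh (0 : Hsp S) = 0 by rewrite -[X in dh X](subrr 0) dhB subrr.
by rewrite /norm1h dh0 normh0 addr0.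
Qed.

Lemma norm1h_Jop W : norm1h (Jop W) = norm1h W.
Proof. by rewrite /norm1h dh_Jop normhN /normh !iph_Jop. Qed.

Lemma iph_le_norm1h V W : `|iph V W| <= normh V * norm1h W.
Proof.
apply: le_trans (ip_CS iph_inner V W) _.
by rewrite ler_wpM2l ?normh_ge0 // lerDl normh_ge0.
Qed.

Lemma iph_dh_le_norm1h V W : `|iph V (dh W)| <= normh V * norm1h W.
Proof.
apply: le_trans (ip_CS iph_inner V (dh W)) _.
by rewrite ler_wpM2l ?normh_ge0 // lerDr normh_ge0.
Qed.

Lemma LhB V1 V2 W : Lh (V1 - V2) W = Lh V1 W - Lh V2 W.
Proof. by rewrite /Lh dhB JopB (ipBl iph_inner) (ipBl iph_inner); ring. Qed.

Lemma Lh_harm V W : Harm_h V -> Lh V W = 0.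
Proof.
case=> dV0 dstarV0; rewrite /Lh dV0 Jop0 (ip0l iph_inner) add0r.
have -> : Jop (dh W) = - dh (Jop W) by rewrite dh_Jop opprK.
by rewrite (ipNr iph_inner) dstarV0 !oppr0.
Qed.

Variable P : Hsp S -> Hsp S.
Hypothesis P_proj : is_PH_h P.

Lemma perp_h_subproj V : perp_h (V - P V).
Proof. by move=> W /(P_proj V).2; rewrite (ip_sym iph_inner). Qed.

Lemma Lh_subproj V W : Lh (V - P V) W = Lh V W.
Proof. by rewrite LhB (Lh_harm _ (P_proj V).1) subr0. Qed.

Lemma iph_subproj_perp V W : perp_h W -> iph (V - P V) W = iph V W.
Proof. by move=> W_perp; rewrite (ipBl iph_inner) (W_perp _ (P_proj V).1) subr0. Qed.
End DiscreteComplex.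

Section DualNorm.
Variables (R : realType) (S : setting R) (l : Hsp S -> R).

Lemma dualnorm_ge0 : 0 <= dualnorm l.
Proof. by apply: sup_ge0 => _ [W _ <-]; rewrite divr_ge0 ?norm1h_ge0. Qed.

Lemma le_dualnorm (C : R) :
  (forall W, `|l W| <= C * norm1h W) -> forall W, `|l W| <= dualnorm l * norm1h W.
Proof.
move=> lC W; have [->|W0] := eqVneq W 0; first by have := lC 0; rewrite !norm1h0 !mulr0.
rewrite -ler_pdivrMr ?norm1h_gt0 //; apply: ub_le_sup; last by exists W.
by exists C => _ [V V0 <-]; rewrite ler_pdivrMr ?norm1h_gt0.
Qed.
End DualNorm.

Section Interpolation.
Variables (R : realType) (S : setting R).
Implicit Types u : Xsp S.

Lemma Ih_lin : subspace_lin (@DIh R S) (@Ih R S).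
Proof.
split.
- by split; [exact: sl0 (I0_lin S)|split; [exact: sl0 (I1_lin S)|
    split; [exact: sl0 (I2_lin S)|exact: sl0 (I3_lin S)]]].
- move=> a x y [x0 [x1 [x2 x3]]] [y0 [y1 [y2 y3]]].
  by split; [exact: (slD (I0_lin S))|split; [exact: (slD (I1_lin S))|
    split; [exact: (slD (I2_lin S))|exact: (slD (I3_lin S))]]].
- move=> a x y [x0 [x1 [x2 x3]]] [y0 [y1 [y2 y3]]].
  by rewrite /Ih /= (slL (I0_lin S)) ?(slL (I1_lin S)) ?(slL (I2_lin S))
    ?(slL (I3_lin S)).
Qed.

Lemma DIh_Jop u : DIh u -> DIh (Jop u).
Proof.
case=> u0 [u1 [u2 u3]]; rewrite /DIh /Jop /=.
by split; [|split; [exact: (sl_rpredN (I1_lin S))|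
  split; [|exact: (sl_rpredN (I3_lin S))]]].
Qed.

Lemma Ih_Jop u : DIh u -> Ih (Jop u) = Jop (Ih u).
Proof.
by case=> _ [u1 [_ u3]]; rewrite /Ih /Jop /= (sl_raddfN (I1_lin S)) ?(sl_raddfN (I3_lin S)).
Qed.

Lemma dh_Ih u : DdX u -> DIh u -> DIh (dX u) -> dh (Ih u) = Ih (dX u).
Proof.
case=> D0u [D1u D2u] [I0u [I1u [I2u _]]] [_ [Idu1 [Idu2 Idu3]]].
by rewrite /dh /Ih /dX /= (sl_raddf0 (I0_lin S)) (coch0 D0u I0u Idu1)
  (coch1 D1u I1u Idu2) (coch2 D2u I2u Idu3).
Qed.

Lemma eps_h_bounded u W :
  `|eps_h u W| <= (normh (Ih u) + normh (Ih (dstarX u))) * norm1h W.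
Proof.
apply: le_trans (ler_normB _ _) _; rewrite mulrDl.
by apply: lerD; [exact: iph_dh_le_norm1h|exact: iph_le_norm1h].
Qed.

Lemma Lh_Ih u W : DdX u -> DIh u -> DIh (dX u) -> DIh (dstarX u) ->
  Lh (Ih u) W = eps_h u (Jop W) + iph (Ih (Jop (dX u + dstarX u))) W.
Proof.
move=> Du Iu Idu Idstaru.
have Idsum : DIh (dX u + dstarX u) := sl_rpredD Ih_lin Idu Idstaru.
rewrite /Lh /eps_h (dh_Ih Du Iu Idu) dh_Jop (ipNr (iph_inner S)) !iph_Jopr.
rewrite Ih_Jop // (sl_raddfD Ih_lin) // JopD (ipDl (iph_inner S)).
ring.
Qed.
End Interpolation.

Theorem lemma4p13 (R : realType) (S : setting R) (N : nat) (t : 'I_N.+1 -> R) (T : R)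
  (TN : ('I_N.+1 -> Xsp S) -> Xsp S)
  (PX : Xsp S -> Xsp S) (Ph : Hsp S -> Hsp S)
  (U U' : R -> Xsp S) (Uh : Hsp S) (CL : R) :
  (0 < N)%N -> t ord0 = 0 -> t ord_max = T ->
  (forall i j : 'I_N.+1, (i < j)%N -> t i < t j) ->
  (forall (a : R) (v w : 'I_N.+1 -> Xsp S),
      TN (fun m => a *: v m + w m) = a *: TN v + TN w) ->
  is_PH_X PX -> is_PH_h Ph ->
  C1_on T U U' ->
  (forall s, s \in `[0, T] ->
     DdX (U s) /\ DdstarX (U s) /\ U' s = Jop (dX (U s) + dstarX (U s))) ->
  DIh (U T) -> DIh (dX (U T)) -> DIh (dstarX (U T)) ->
  DIh (TN (fun m => U (t m))) -> DIh (PX (U (t ord_max))) ->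
  DIh (TN (fun m => U (t m)) - U' (t ord_max)) ->
  (forall Vh : Hsp S, Lh (Uh - Ph Uh) Vh =
     iph (Ih (TN (fun m => U (t m))) - Ph (Ih (TN (fun m => U (t m))))) Vh) ->
  Ph Uh = Ih (PX (U (t ord_max))) ->
  0 < CL ->
  (forall Vh : Hsp S, perp_h Vh ->
     CL * norm1h Vh <= sup [set Lh Vh W / norm1h W | W in [set W | perp_h W /\ W != 0]]) ->
  norm1h ((Ih (U T) - Uh) - Ph (Ih (U T) - Uh)) <=
    CL^-1 * (dualnorm (eps_h (U T)) +
             normh (Ih (TN (fun m => U (t m)) - U' (t ord_max)))).
Proof.
move=> N_gt0 t0 tN t_incr _ _ Ph_proj _ U_eq Iu Idu Idstaru Ix _ _ scheme _ CL_gt0 infsup.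
rewrite tN; set x := TN _ in Ix scheme *; set u := U T in Iu Idu Idstaru *.
have T_in : T \in `[0, T].
  by rewrite in_itv /= lexx andbT -t0 -tN ltW // t_incr.
have [Du [_ U'T]] := U_eq T T_in; rewrite -/u in Du U'T.
have IU'T : DIh (U' T) by rewrite U'T; apply/DIh_Jop/(sl_rpredD (Ih_lin S)).
have Lh_error W : perp_h W ->
    Lh (Ih u - Uh - Ph (Ih u - Uh)) W = eps_h u (Jop W) - iph (Ih (x - U' T)) W.
  move=> W_perp; rewrite Lh_subproj // LhB Lh_Ih // -U'T -(Lh_subproj Ph_proj Uh).
  rewrite scheme iph_subproj_perp // (sl_raddfB (Ih_lin S)) // (ipBl (iph_inner S)).
  ring.
rewrite ler_pdivlMl //; apply: le_trans (infsup _ (perp_h_subproj Ph_proj _)) _.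
apply: sup_ratio_le => [|W [_ W0]|W [W_perp _]].
- by rewrite addr_ge0 ?dualnorm_ge0 ?normh_ge0.
- exact: norm1h_gt0.
- rewrite Lh_error // mulrDl; apply: lerD.
    by rewrite -(norm1h_Jop W); apply/ler_normlW/(le_dualnorm (eps_h_bounded u)).
  by have /ler_normlP[] := iph_le_norm1h (Ih (x - U' T)) W.
Qed.
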